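(* Let $X$ be a real Banach space and $(x_n)$ a bounded sequence in $X$. Suppose that $c>0$ is such that \[ \Big\|\sum_{j=1}^n \alpha_j x_j\Big\|\ge c\sum_{j=1}^n |\alpha_j| \] for all $n\in\mathbb{N}$ and all real numbers $\alpha_1,\dots,\alpha_n$. Then (i) $\delta_X(x_n)\ge 2c$, and (ii) $\operatorname{d}(\operatorname{clust}_{X^{**}}(x_n),X)\ge c$.
   Context: $X$ is identified with its canonical image in $X^{**}$. For a bounded sequence $(x_n)$ in $X$, $\operatorname{clust}_{X^{**}}(x_n)$ is the set of all weak$^*$ cluster points of $(x_n)$ in $X^{**}$ and $\delta_X(x_n)$ is the norm-diameter of this set (equivalently $\sup_{x^*\in B_{X^*}}(\limsup_n x^*(x_n)-\liminf_n x^*(x_n))$). For nonempty sets $A,B$, $\operatorname{d}(A,B)=\inf\{\|a-b\|: a\in A,b\in B\}$. *)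

From HB Require Import structures.
From mathcomp Require Import all_boot all_order all_algebra.
From mathcomp Require Import all_classical all_reals all_analysis.
Set Implicit Arguments. Unset Strict Implicit. Unset Printing Implicit Defensive.
Import Order.TTheory GRing.Theory Num.Theory.
Import numFieldNormedType.Exports.
Local Open Scope classical_set_scope.
Local Open Scope ring_scope.

Section Bidual.
Variables (R : realType) (X : normedModType R).

Definition lin_fun (f : X -> R) : Prop :=
  forall (a : R) (u v : X), f (a *: u + v) = a * f u + f v.

Definition dual_el (f : X -> R) : Prop :=
  lin_fun f /\ exists M : R, forall x, `|f x| <= M * `|x|.

Definition dual_ball (f : X -> R) : Prop :=
  lin_fun f /\ forall x, `|f x| <= `|x|.

(* X^{**}: bounded linear functionals on X^*; an element Phi is represented
   by a function on (X -> R) whose values off X^* are irrelevant. *)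
Definition bidual_el (Phi : (X -> R) -> R) : Prop :=
  (forall (a : R) (f g : X -> R), dual_el f -> dual_el g ->
      Phi (fun x => a * f x + g x) = a * Phi f + Phi g) /\
  exists M : R, forall f, dual_ball f -> `|Phi f| <= M.

Definition bidual_norm (Phi : (X -> R) -> R) : \bar R :=
  ereal_sup [set (`|Phi f|)%:E | f in dual_ball].

Definition canon (x : X) : (X -> R) -> R := fun f => f x.

Definition bidual_sub (Phi Psi : (X -> R) -> R) : (X -> R) -> R :=
  fun f => Phi f - Psi f.

(* weak^* cluster points of (x_n) in X^{**}: every basic weak^*
   neighbourhood of Phi (finitely many functionals, radius eps) contains
   x_n for infinitely many n *)
Definition clust (x : nat -> X) : set ((X -> R) -> R) :=
  [set Phi | bidual_el Phi /\
     forall (fs : seq (X -> R)) (eps : R), (forall f, f \in fs -> dual_el f) ->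
       0 < eps -> forall N : nat, exists2 n : nat, (N <= n)%N &
         forall f, f \in fs -> `|Phi f - f (x n)| < eps].

Definition delta (x : nat -> X) : \bar R :=
  ereal_sup [set bidual_norm (bidual_sub Phi Psi)
            | Phi in clust x & Psi in clust x].

Definition dist_clust_X (x : nat -> X) : \bar R :=
  ereal_inf [set bidual_norm (bidual_sub Phi (canon y))
            | Phi in clust x & y in [set: X]].

End Bidual.

(* Hahn–Banach (proved here by Zorn's lemma on graphs of partial functionals
   dominated by the norm) turns the l1 lower bound into norm-one functionals
   with prescribed values c * s_j at x_j, for any signs |s_j| <= 1.
   (i) With s_j = (-1)^j, weak* cluster points of the even and of the odd
   subsequence (obtained as limits along an ultrafilter) take the values c and
   -c at the same functional.
   (ii) Given y in X, the l1 lower bound still holds on a tail of (x_n) with a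
   multiple of y added; hence some norm-one functional vanishes at y and equals
   c on that tail, which separates y from every cluster point by c. *)

From Pilot Require Import Defs.
From HB Require Import structures.
From mathcomp Require Import all_boot all_order all_algebra.
From mathcomp Require Import all_classical all_reals all_analysis.
From mathcomp Require Import ring lra.
Set Implicit Arguments. Unset Strict Implicit. Unset Printing Implicit Defensive.
Import Order.TTheory GRing.Theory Num.Theory.
Import numFieldNormedType.Exports.
Local Open Scope classical_set_scope.
Local Open Scope ring_scope.

Section HahnBanach.
Variables (R : realType) (X : normedModType R).

(* Partial linear functionals are handled through their graphs, so that Zorn's
   lemma applies to sets ordered by inclusion. *)
Definition lin_graph (G : set (X * R)) :=
  [/\ G (0, 0),
      forall a x r x' r', G (x, r) -> G (x', r') -> G (a *: x + x', a * r + r')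
    & forall r, G (0, r) -> r = 0].

Definition norm_bounded_graph (G : set (X * R)) :=
  forall x r, G (x, r) -> r <= `|x|.

Lemma lin_graphZ G a x r : lin_graph G -> G (x, r) -> G (a *: x, a * r).
Proof.
by move=> [G00 GD _] Gx; have := GD a x r 0 0 Gx G00; rewrite !addr0.
Qed.

Lemma lin_graph_fun G x r r' : lin_graph G -> G (x, r) -> G (x, r') -> r = r'.
Proof.
move=> [_ GD G0] Gx Gx'.
by have := GD (-1) x r x r' Gx Gx'; rewrite scaleN1r addNr => /G0; lra.
Qed.

Definition graph_adjoin (A : set (X * R)) (x0 : X) (t : R) : set (X * R) :=
  [set p | exists g r a, A (g, r) /\ p = (g + a *: x0, r + a * t)].

Lemma graph_adjoin_sub A x0 t : A `<=` graph_adjoin A x0 t.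
Proof. by case=> g r Ag; exists g, r, 0; rewrite scale0r mul0r !addr0. Qed.

Lemma graph_adjoin_point A x0 t : lin_graph A -> graph_adjoin A x0 t (x0, t).
Proof.
by case=> A00 _ _; exists 0, 0, 1; rewrite scale1r mul1r !add0r.
Qed.

(* The one-step Hahn–Banach bound: r - |g - x0| <= |g' + x0| - r' for all
   pairs of points, hence a value t fits between the sup and the inf. *)
Lemma adjoin_value A x0 : lin_graph A -> norm_bounded_graph A ->
  exists t, forall g r, A (g, r) -> r - `|g - x0| <= t /\ t <= `|g + x0| - r.
Proof.
move=> [A00 AD _] Ab.
pose S := [set z | exists g r, A (g, r) /\ z = r - `|g - x0|].
have S_le g r g' r' : A (g, r) -> A (g', r') ->
    r - `|g - x0| <= `|g' + x0| - r'.
  move=> Ag Ag'; have /Ab := AD 1 g r g' r' Ag Ag'; rewrite scale1r mul1r.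
  have := ler_normD (g - x0) (g' + x0).
  rewrite addrCA subrK [g' + g]addrC; lra.
have S0 : S !=set0 by exists (0 - `|0 - x0|), 0, 0.
have S_ub : has_ubound S.
  exists `|x0| => _ [g [r [Ag ->]]].
  have := Ab _ _ Ag; have := ler_normD (g - x0) x0; rewrite subrK; lra.
exists (sup S) => g r Ag; split; first by apply: ub_le_sup => //; exists g, r.
by apply: ge_sup => // _ [g' [r' [Ag' ->]]]; exact: S_le.
Qed.

Lemma lin_graph_adjoin A x0 t : lin_graph A -> ~ (exists r, A (x0, r)) ->
  lin_graph (graph_adjoin A x0 t).
Proof.
move=> lA nx0; have [A00 AD A0] := lA.
split; first exact: graph_adjoin_sub.
  move=> b _ _ _ _ [g1 [r1 [a1 [Ag1 [-> ->]]]]] [g2 [r2 [a2 [Ag2 [-> ->]]]]].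
  exists (b *: g1 + g2), (b * r1 + r2), (b * a1 + a2); split; first exact: AD.
  congr pair; last by ring.
  by rewrite !scalerDr scalerDl scalerA -!addrA; congr (_ + _); rewrite addrCA.
move=> _ [g [r [a [Ag [g_eq ->]]]]].
have [a0|a0] := eqVneq a 0.
  by move: g_eq Ag; rewrite a0 scale0r addr0 mul0r addr0 => <- /A0.
exfalso; apply: nx0; exists (- a^-1 * r).
suff -> : x0 = - a^-1 *: g by exact: lin_graphZ.
apply: (scalerI a0); rewrite scalerA mulrN mulfV // scaleN1r.
by apply/eqP; rewrite -subr_eq0 opprK addrC -g_eq.
Qed.

Lemma norm_bounded_adjoin A x0 t : lin_graph A -> norm_bounded_graph A ->
  (forall g r, A (g, r) -> r - `|g - x0| <= t /\ t <= `|g + x0| - r) ->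
  norm_bounded_graph (graph_adjoin A x0 t).
Proof.
move=> lA Ab tP _ _ [g [r [a [Ag [-> ->]]]]].
have [a0|a0|->] := ltgtP a 0; last by rewrite scale0r mul0r !addr0; exact: Ab.
- have na : 0 < - a by rewrite oppr_gt0.
  have [+ _] := tP _ _ (lin_graphZ (- a)^-1 lA Ag).
  have -> : g + a *: x0 = (- a) *: ((- a)^-1 *: g - x0).
    by rewrite scalerBr scalerA mulfV ?gt_eqF // scale1r scaleNr opprK.
  rewrite normrZ gtr0_norm // => /(ler_wpM2l (ltW na)).
  by rewrite mulrBr mulrA mulfV ?gt_eqF // mul1r; lra.
- have [_ +] := tP _ _ (lin_graphZ a^-1 lA Ag).
  have -> : g + a *: x0 = a *: (a^-1 *: g + x0).
    by rewrite scalerDr scalerA mulfV ?gt_eqF // scale1r.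
  rewrite normrZ gtr0_norm // => /(ler_wpM2l (ltW a0)).
  by rewrite mulrBr mulrA mulfV ?gt_eqF // mul1r; lra.
Qed.

Definition graph_extension (G0 G : set (X * R)) :=
  [/\ lin_graph G, norm_bounded_graph G & G0 `<=` G].

(* [set0] is allowed because [Zorn_bigcup] also covers the empty chain. *)
Lemma graph_extension_chain G0 (F : set (set (X * R))) :
  (forall G, F G -> G = set0 \/ graph_extension G0 G) ->
  total_on F subset ->
  \bigcup_(G in F) G = set0 \/ graph_extension G0 (\bigcup_(G in F) G).
Proof.
move=> FP Ftot.
have ext H : F H -> H !=set0 -> graph_extension G0 H.
  by move=> FH [p Hp]; case: (FP H FH) => // H0; rewrite H0 in Hp.
have [[G [FG [p Gp]]]|nG] := pselect (exists G, F G /\ G !=set0); last first.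
  left; apply/seteqP; split => // p [H FH Hp].
  by apply: nG; exists H; split => //; exists p.
have [[G00 _ _] _ sG] := ext G FG (ex_intro _ p Gp).
right; split; last by move=> q /sG Gq; exists G.
- split; first by exists G.
    move=> a x r x' r' [H1 FH1 H1x] [H2 FH2 H2x].
    have [s12|s21] := Ftot H1 H2 FH1 FH2.
    + have [[_ HD _] _ _] := ext H2 FH2 (ex_intro _ _ H2x).
      by exists H2 => //; apply: HD => //; exact: s12.
    + have [[_ HD _] _ _] := ext H1 FH1 (ex_intro _ _ H1x).
      by exists H1 => //; apply: HD => //; exact: s21.
  move=> r [H FH Hx].
  by have [[_ _ H0] _ _] := ext H FH (ex_intro _ _ Hx); exact: H0.
- move=> x r [H FH Hx].
  by have [_ Hb _] := ext H FH (ex_intro _ _ Hx); exact: Hb.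
Qed.

Lemma hahn_banach_graph G0 : lin_graph G0 -> norm_bounded_graph G0 ->
  exists f, dual_ball f /\ forall x r, G0 (x, r) -> f x = r.
Proof.
move=> lG0 bG0.
have [A [[A0|[lA bA sA]] Amax]] := Zorn_bigcup (@graph_extension_chain G0).
  exfalso; apply: (Amax G0); last by right; split.
  by rewrite A0; split => // /(_ (0, 0)); apply; case: lG0.
have A_total x0 : exists r, A (x0, r).
  apply: contrapT => nx0; have [t tP] := adjoin_value x0 lA bA.
  apply: (Amax (graph_adjoin A x0 t)).
    split; first exact: graph_adjoin_sub.
    by move=> /(_ (x0, t)) sub; apply: nx0; exists t; apply/sub/graph_adjoin_point.
  right; split; first exact: lin_graph_adjoin.
    exact: norm_bounded_adjoin.
  by move=> p /sA /graph_adjoin_sub.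
pose f x := sval (cid (A_total x)).
have fP x : A (x, f x) by rewrite /f; case: cid.
exists f; split; last by move=> x r /sA; exact: lin_graph_fun (fP x).
split=> [a u v|x].
  by apply: (lin_graph_fun lA (fP _)); case: lA => _ + _; apply.
rewrite ler_norml bA // andbT.
by have := bA _ _ (lin_graphZ (-1) lA (fP x)); rewrite scaleN1r normrN; lra.
Qed.

End HahnBanach.

Section Sums.
Variables (R : ringType) (V : lmodType R).

Lemma sum_concat_scale n n' (al al' : nat -> R) a (v : nat -> V) :
  \sum_(j < n + n') (a * (if (j < n)%N then al j else 0) +
      (if (j < n')%N then al' j else 0)) *: v j =
  a *: \sum_(j < n) al j *: v j + \sum_(j < n') al' j *: v j.
Proof.
have pad m N (F : nat -> V) : (m <= N)%N ->
    \sum_(j < N) (if (j < m)%N then F j else 0) = \sum_(j < m) F j.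
  by move=> mN; rewrite (big_ord_widen _ F mN) -big_mkcond.
rewrite -(pad n _ (fun j => al j *: v j) (leq_addr n' n)).
rewrite -(pad n' _ (fun j => al' j *: v j) (leq_addl n n')).
rewrite scaler_sumr -big_split /=; apply: eq_bigr => j _.
by rewrite scalerDl -scalerA; congr (_ *: _ + _); case: ifP; rewrite ?scale0r.
Qed.

Lemma sum_delta_scale j (v : nat -> V) :
  \sum_(i < j.+1) (if (i : nat) == j then 1 else 0) *: v i = v j.
Proof.
rewrite big_ord_recr /= eqxx scale1r big1 ?add0r // => i _.
by rewrite (ltn_eqF (ltn_ord i)) scale0r.
Qed.

End Sums.

Section Functionals.
Variables (R : realType) (X : normedModType R).

Lemma dual_ball_el (f : X -> R) : dual_ball f -> dual_el f.
Proof. by move=> [lf nf]; split => //; exists 1 => x; rewrite mul1r. Qed.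

(* The functional sum al_j w_j + be y |-> c sum al_j s_j is well defined and of
   norm <= 1 on the span, by the l1 lower bound; Hahn–Banach extends it. *)
Lemma l1_functional (c : R) (w : nat -> X) (s : nat -> R) (y : X) : 0 < c ->
  (forall j, `|s j| <= 1) ->
  (forall n (al : nat -> R) (be : R),
     c * \sum_(j < n) `|al j| <= `|\sum_(j < n) al j *: w j + be *: y|) ->
  exists f, dual_ball f /\ (forall j, f (w j) = c * s j) /\ f y = 0.
Proof.
move=> c0 s1 lb.
pose G0 := [set p : X * R | exists n (al : nat -> R) be,
  p = (\sum_(j < n) al j *: w j + be *: y, c * \sum_(j < n) al j * s j)].
have lG0 : lin_graph G0.
  split.
  - by exists 0%N, (fun=> 0), 0; rewrite !big_ord0 scale0r addr0 mulr0.
  - move=> a _ _ _ _ [n [al [be [-> ->]]]] [n' [al' [be' [-> ->]]]].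
    exists (n + n')%N, (fun j => a * (if (j < n)%N then al j else 0) +
      (if (j < n')%N then al' j else 0)), (a * be + be').
    rewrite sum_concat_scale (@sum_concat_scale _ R^o); congr pair.
      by rewrite scalerDr scalerDl scalerA addrACA.
    by rewrite mulrDr mulrCA.
  - move=> r [n [al [be [w0 ->]]]].
    have := lb n al be; rewrite -w0 normr0 pmulr_rle0 // => le0.
    have /psumr_eq0P al0 : \sum_(j < n) `|al j| = 0.
      by apply/eqP; rewrite eq_le le0 sumr_ge0.
    rewrite big1 ?mulr0 // => j _.
    by rewrite (normr0_eq0 (al0 (fun i _ => normr_ge0 _) j isT)) mul0r.
have bG0 : norm_bounded_graph G0.
  move=> _ _ [n [al [be [-> ->]]]]; apply: le_trans (lb n al be).
  rewrite ler_pM2l //; apply: ler_sum => j _.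
  by rewrite (le_trans (ler_norm _)) // normrM ler_piMr.
have [f [fb fG0]] := hahn_banach_graph lG0 bG0.
exists f; split => //; split.
  move=> j; apply: fG0; exists j.+1, (fun i => if i == j then 1 else 0), 0.
  by rewrite sum_delta_scale (@sum_delta_scale _ R^o) scale0r addr0.
apply: fG0; exists 0%N, (fun=> 0), 1.
by rewrite !big_ord0 scale1r add0r mulr0.
Qed.

Lemma ultra_bounded_cvg (U : set_system nat) (u : nat -> R) B :
  UltraFilter U -> (forall n, `|u n| <= B) -> exists p : R, u @ U --> p.
Proof.
move=> UU uB.
have [p [_ p_clust]] : `[- B, B]%classic `&` cluster (u @ U) !=set0.
  apply: (@segment_compact R (- B) B) => //=.
  by apply: filterS filterT => n _ /=; rewrite in_itv /= -ler_norml.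
exists p; apply/cvgrPdist_lt => e e0.
have [//|Ufar] := in_ultra_setVsetC [set n | `|p - u n| < e] UU.
have {}Ufar : U [set n | e <= `|p - u n|].
  by apply: filterS Ufar => n /= /negP; rewrite -leNgt.
have [q [/= far_q]] := p_clust [set q | e <= `|p - q|] _ Ufar (nbhsx_ballx p e e0).
by rewrite -ball_normE /= ltNge far_q.
Qed.

Lemma clust_of_filter_cvg (U : set_system nat) (z : nat -> X) Phi :
  ProperFilter U -> (forall N, U [set n | (N <= n)%N]) -> bidual_el Phi ->
  (forall f, dual_el f -> (f \o z) @ U --> Phi f) -> clust z Phi.
Proof.
move=> U_proper Utail bPhi Phi_cvg; split=> // fs eps fs_dual e0 N.
have near_fs : U [set n | forall f, f \in fs -> `|Phi f - f (z n)| < eps].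
  elim: fs fs_dual => [|g fs IH] fs_dual.
    by apply: filterS filterT => n _ f; rewrite in_nil.
  have /IH Ufs : forall f, f \in fs -> dual_el f.
    by move=> f fs_f; apply: fs_dual; rewrite in_cons fs_f orbT.
  have /cvgrPdist_lt /(_ _ e0) Ug := Phi_cvg g (fs_dual g (mem_head _ _)).
  apply: filterS (filterI Ug Ufs) => n [gn fsn] f.
  by rewrite in_cons => /orP [/eqP ->|]; [exact: gn|exact: fsn].
by have [n [? ?]] := filter_ex (filterI (Utail N) near_fs); exists n.
Qed.

Lemma clust_exists (z : nat -> X) M : (forall n, `|z n| <= M) ->
  exists Phi, clust z Phi.
Proof.
move=> zM.
have [U [UU Ucof]] := ultraFilterLemma (@eventually_filter).
pose Phi (f : X -> R) : R := lim ((f \o z) @ U).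
have Phi_cvg f : dual_el f -> (f \o z) @ U --> Phi f.
  move=> [_ [K fK]].
  have [|p p_lim] := @ultra_bounded_cvg U (f \o z) (`|K| * M) UU.
    move=> n; apply: le_trans (fK _) _.
    by rewrite (le_trans (ler_wpM2r (normr_ge0 _) (ler_norm K))) ?ler_wpM2l.
  by rewrite /Phi (cvg_lim (@norm_hausdorff _ R^o) p_lim).
have Utail N : U [set n | (N <= n)%N] by apply: Ucof; exact: nbhs_infty_ge.
exists Phi; apply: (clust_of_filter_cvg (@ultra_proper _ _ UU) Utail _ Phi_cvg).
split=> [a f g f_dual g_dual|].
  apply: (cvg_lim (@norm_hausdorff _ R^o)).
  by apply: cvgD; [exact: cvgMl_tmp (Phi_cvg _ f_dual)|exact: Phi_cvg].
exists M => f fb; apply/ler_addgt0Pr => e e0.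
have /cvgrPdist_lt /(_ _ e0) Uf := Phi_cvg f (dual_ball_el fb).
have [n /= Phi_near] := filter_ex Uf.
have : `|f (z n)| <= M by apply: le_trans (proj2 fb _) (zM n).
have := ler_distD (f (z n)) (Phi f) 0; rewrite !subr0; lra.
Qed.

Lemma clust_subseq (z : nat -> X) (g : nat -> nat) Phi :
  (forall n, (n <= g n)%N) -> clust (z \o g) Phi -> clust z Phi.
Proof.
move=> g_ge [bPhi near_Phi]; split => // fs eps fs_dual e0 N.
have [n Nn near_n] := near_Phi fs eps fs_dual e0 N.
by exists (g n) => //; exact: leq_trans Nn (g_ge n).
Qed.

Lemma clust_eventually_const (z : nat -> X) Phi f K v :
  clust z Phi -> dual_el f -> (forall n, (K <= n)%N -> f (z n) = v) -> Phi f = v.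
Proof.
move=> [_ near_Phi] f_dual fv; apply/eqP; rewrite -subr_eq0 -normr_le0.
apply/ler_addgt0Pr => e e0; rewrite add0r.
have f_only g : g \in [:: f] -> dual_el g by rewrite inE => /eqP ->.
have [n Kn /(_ f (mem_head _ _))] := near_Phi [:: f] e f_only e0 K.
by rewrite (fv n Kn) => /ltW.
Qed.

Lemma l1_lower_bound_concat (x : nat -> X) (c : R) n n' (al al' : nat -> R) u v :
  (forall n (al : nat -> R),
     c * \sum_(j < n) `|al j| <= `|\sum_(j < n) al j *: x j|) ->
  c * (`|u| * \sum_(j < n) `|al j| + `|v| * \sum_(j < n') `|al' j|) <=
  `|u *: \sum_(j < n) al j *: x j + v *: \sum_(j < n') al' j *: x (n + j)%N|.
Proof.
move=> lb; pose ga j := if (j < n)%N then u * al j else v * al' (j - n)%N.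
have ga_lo (j : 'I_n) : ga j = u * al j by rewrite /ga ltn_ord.
have ga_hi (j : 'I_n') : ga (n + j)%N = v * al' j.
  by rewrite /ga ltnNge leq_addr addKn.
have ga_sum : \sum_(j < n + n') `|ga j| =
    `|u| * \sum_(j < n) `|al j| + `|v| * \sum_(j < n') `|al' j|.
  rewrite big_split_ord !mulr_sumr /=.
  by congr (_ + _); apply: eq_bigr => j _; rewrite ?ga_lo ?ga_hi normrM.
have ga_vec : \sum_(j < n + n') ga j *: x j =
    u *: \sum_(j < n) al j *: x j + v *: \sum_(j < n') al' j *: x (n + j)%N.
  rewrite big_split_ord !scaler_sumr /=.
  by congr (_ + _); apply: eq_bigr => j _; rewrite ?ga_lo ?ga_hi scalerA.
by rewrite -ga_sum -ga_vec.
Qed.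

(* If the l1 lower bound failed both for [x] perturbed by [be y] and for a tail
   beyond the support of that failure perturbed by [be' y], then eliminating
   [y] between the two would make it fail for [x] itself. *)
Lemma l1_lower_bound_tail (x : nat -> X) (c : R) (y : X) : 0 < c ->
  (forall n (al : nat -> R),
     c * \sum_(j < n) `|al j| <= `|\sum_(j < n) al j *: x j|) ->
  exists K, forall n (al : nat -> R) be,
    c * \sum_(j < n) `|al j| <= `|\sum_(j < n) al j *: x (K + j)%N + be *: y|.
Proof.
move=> c0 lb.
have [good0|] := pselect (forall n (al : nat -> R) be, c * \sum_(j < n) `|al j| <=
   `|\sum_(j < n) al j *: x (0 + j)%N + be *: y|); first by exists 0%N.
move=> /existsNP [n /existsNP [al /existsNP [be /negP]]]; rewrite -ltNge => bad.
exists n => n' al' be'; rewrite leNgt; apply/negP => bad'.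
set S := \sum_(j < n) `|al j| in bad; set S' := \sum_(j < n') `|al' j| in bad'.
set Z := \sum_(j < n) al j *: x j in bad.
set Z' := \sum_(j < n') al' j *: x (n + j)%N in bad'.
have be0 : be != 0.
  by apply: contraTneq bad => ->; rewrite scale0r addr0 -leNgt lb.
have be'0 : be' != 0.
  apply: contraTneq bad' => ->; rewrite scale0r addr0 -leNgt.
  by have := l1_lower_bound_concat n n' al al' 0 1 lb; rewrite normr0 normr1 !mul0r
    !mul1r scale0r scale1r !add0r.
have := l1_lower_bound_concat n n' al al' be^-1 (- be'^-1) lb; rewrite -/S -/S' -/Z -/Z'.
have -> : be^-1 *: Z + (- be'^-1) *: Z' =
    be^-1 *: (Z + be *: y) - be'^-1 *: (Z' + be' *: y).
  by rewrite !scalerDr !scalerA !mulVf // !scale1r scaleNr opprD addrACA subrr addr0.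
have := ler_normB (be^-1 *: (Z + be *: y)) (be'^-1 *: (Z' + be' *: y)).
rewrite !normrZ normrN !normfV.
have inv_be : 0 < `|be|^-1 by rewrite invr_gt0 normr_gt0.
have inv_be' : 0 < `|be'|^-1 by rewrite invr_gt0 normr_gt0.
have : `|be|^-1 * `|Z + be *: y| < `|be|^-1 * (c * S) by rewrite ltr_pM2l.
have : `|be'|^-1 * `|Z' + be' *: y| < `|be'|^-1 * (c * S') by rewrite ltr_pM2l.
nra.
Qed.

Lemma bidual_norm_ge (Phi : (X -> R) -> R) f :
  dual_ball f -> (`|Phi f|%:E <= bidual_norm Phi)%E.
Proof. by move=> fb; apply: ereal_sup_ubound; exists f. Qed.

Lemma delta_ge (x : nat -> X) (c M : R) : (forall n, `|x n| <= M) -> 0 < c ->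
  (forall n (al : nat -> R),
     c * \sum_(j < n) `|al j| <= `|\sum_(j < n) al j *: x j|) ->
  ((2 * c)%:E <= delta x)%E.
Proof.
move=> xM c0 lb.
have sign_le1 j : `|(-1) ^+ j : R| <= 1 by rewrite normrX normrN1 expr1n.
have lb0 n (al : nat -> R) (be : R) : c * \sum_(j < n) `|al j| <=
    `|\sum_(j < n) al j *: x j + be *: 0|.
  by rewrite scaler0 addr0; exact: lb.
have [f [fb [f_alt _]]] := l1_functional c0 sign_le1 lb0.
have [Phi Phi_even] := @clust_exists (fun n => x (2 * n)%N) M (fun n => xM _).
have [Psi Psi_odd] := @clust_exists (fun n => x (2 * n).+1) M (fun n => xM _).
have Phi_f : Phi f = c.
  apply: (clust_eventually_const (K := 0%N) Phi_even (dual_ball_el fb)) => n _.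
  by rewrite f_alt exprM sqrrN !expr1n mulr1.
have Psi_f : Psi f = - c.
  apply: (clust_eventually_const (K := 0%N) Psi_odd (dual_ball_el fb)) => n _.
  by rewrite f_alt exprS exprM sqrrN !expr1n mulr1 mulrN1.
have Phi_clust : clust x Phi.
  by apply: clust_subseq Phi_even => n; rewrite leq_pmull.
have Psi_clust : clust x Psi.
  by apply: clust_subseq Psi_odd => n; rewrite leqW // leq_pmull.
apply: le_trans (ereal_sup_ubound _); last by exists Phi => //; exists Psi.
apply: le_trans (bidual_norm_ge _ fb).
by rewrite lee_fin /bidual_sub Phi_f Psi_f opprK ger0_norm; lra.
Qed.

Lemma dist_clust_X_ge (x : nat -> X) (c : R) : 0 < c ->
  (forall n (al : nat -> R),
     c * \sum_(j < n) `|al j| <= `|\sum_(j < n) al j *: x j|) ->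
  (c%:E <= dist_clust_X x)%E.
Proof.
move=> c0 lb; apply: le_ereal_inf_tmp => _ [Phi Phi_clust [y _ <-]].
have [K lbK] := l1_lower_bound_tail y c0 lb.
have one_le1 (j : nat) : `|1 : R| <= 1 by rewrite normr1.
have [g [gb [g_tail gy]]] := l1_functional (w := fun j => x (K + j)%N) c0 one_le1 lbK.
have Phi_g : Phi g = c.
  apply: (clust_eventually_const (K := K) Phi_clust (dual_ball_el gb)) => n Kn.
  by rewrite -(subnKC Kn) g_tail mulr1.
apply: le_trans (bidual_norm_ge _ gb).
by rewrite lee_fin /bidual_sub /Defs.canon Phi_g gy subr0 ger0_norm // ltW.
Qed.

End Functionals.

Theorem lemma2p1 (R : realType) (X : completeNormedModType R)
  (x : nat -> X) (c : R) :
  (exists M : R, forall n, `|x n| <= M) ->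
  0 < c ->
  (forall (n : nat) (alpha : nat -> R),
      c * (\sum_(j < n) `|alpha j|) <= `|\sum_(j < n) alpha j *: x j|) ->
  ((2 * c)%:E <= delta x)%E /\ (c%:E <= dist_clust_X x)%E.
Proof.
move=> [M xM] c0 lb.
by split; [exact: delta_ge xM c0 lb | exact: dist_clust_X_ge c0 lb].
Qed.
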